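(* Let $\mathcal{D}_u$ be a finite set of inputs (the unlabeled pool) and let $\Omega=\mathcal{D}_u$. Fix real hyperparameters $\alpha,\beta$ with $0\le \alpha,\ \beta,\ \alpha+\beta\le 1$. Let $f:2^{\Omega}\to\mathbb{R}$ be a set function such that for every $S\subseteq\Omega$ and every $x_i\in\Omega\setminus S$, $$f(S\cup\{x_i\})-f(S)=\alpha\,VAP(x_i)+\beta\, d(S,x_i)+(1-\alpha-\beta)\,R(S,x_i),$$ where $VAP$, $d$ and $R$ are as defined in the context. Then $f$ is monotone non-decreasing, i.e. $f(S\cup\{x\})\ge f(S)$ for every $S\subseteq\Omega$ and $x\in\Omega$.
   Context: Let $h_\theta$ be a fixed classifier mapping each input $x$ to a probability vector $h_\theta(x)$ over $K$ classes (softmax output), and let $D_{KL}(p\,\|\,q)=\sum_k p_k\ln(p_k/q_k)$ denote the KL divergence. Fix $N\ge1$ and, for each input $x$, perturbations $r_1,\dots,r_N$ (with $\|r_i\|\le\epsilon$). The Virtual Adversarial Pairwise score is $$VAP(x)=\frac{1}{N^2}\Big(\sum_{i=1}^N D_{KL}(h_\theta(x)\,\|\,h_\theta(x+r_i))+\sum_{i=1}^N\sum_{j=1,j\ne i}^N D_{KL}(h_\theta(x+r_i)\,\|\,h_\theta(x+r_j))\Big).$$ The diversity score is $d(S,x_i)=\min_{x\in S} D(x,x_i)$ with $D(x_j,x_i)=D_{KL}(h_\theta(x_j)\,\|\,h_\theta(x_i))$. For inputs $x_i,x_j$ define the similarity $s_{ij}=-\ln\big(1-BC(h_\theta(x_i),h_\theta(x_j))\big)$,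 where $BC(p,q)=\sum_k\sqrt{p_kq_k}$ is the Bhattacharyya coefficient. The representativeness score is $R(S,x_i)=\sum_{x_k\in\mathcal{D}_u}\max\big(0,\ s_{ki}-\max_{x_j\in S}s_{kj}\big)$. *)

From HB Require Import structures.
From mathcomp Require Import all_boot all_order all_algebra finmap.
From mathcomp Require Import all_classical all_reals all_analysis.
Set Implicit Arguments. Unset Strict Implicit. Unset Printing Implicit Defensive.
Import Order.TTheory GRing.Theory Num.Theory.
Import numFieldNormedType.Exports.
Local Open Scope fset_scope.
Local Open Scope ring_scope.

Section Defs.
Variables (R : realType) (K : nat).

(* probability vectors over K classes, as functions 'I_K -> R *)
Definition KL (p q : 'I_K -> R) : R := \sum_(k < K) p k * ln (p k / q k).

Definition BC (p q : 'I_K -> R) : R := \sum_(k < K) Num.sqrt (p k * q k).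

Variable X : normedModType R.
Variable h : X -> 'I_K -> R.

(* Virtual Adversarial Pairwise score; r x i is the i-th perturbation of x *)
Definition VAP (N : nat) (r : X -> 'I_N -> X) (x : X) : R :=
  (N%:R ^+ 2)^-1 *
  (\sum_(i < N) KL (h x) (h (x + r x i)) +
   \sum_(i < N) \sum_(j < N | j != i) KL (h (x + r x i)) (h (x + r x j))).

(* minimum / maximum of F over a finite set S; convention: 0 when S is empty *)
Definition fmin (S : {fset X}) (F : X -> R) : R :=
  if enum_fset S is x0 :: _ then \big[Num.min/F x0]_(x <- S) F x else 0.
Definition fmax (S : {fset X}) (F : X -> R) : R :=
  if enum_fset S is x0 :: _ then \big[Num.max/F x0]_(x <- S) F x else 0.

Definition div_score (S : {fset X}) (xi : X) : R :=
  fmin S (fun x => KL (h x) (h xi)).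

Definition sim (xi xj : X) : R := - ln (1 - BC (h xi) (h xj)).

Definition repr_score (Du S : {fset X}) (xi : X) : R :=
  \sum_(xk <- Du) Num.max 0 (sim xk xi - fmax S (fun xj => sim xk xj)).

End Defs.

From HB Require Import structures.
From mathcomp Require Import all_boot all_order all_algebra finmap.
From mathcomp Require Import all_classical all_reals all_analysis.
Set Implicit Arguments. Unset Strict Implicit. Unset Printing Implicit Defensive.
Import Order.TTheory GRing.Theory Num.Theory.
Import numFieldNormedType.Exports.
Local Open Scope fset_scope.
Local Open Scope ring_scope.

(* Every score entering the marginal gain is nonnegative: VAP and the
   diversity score are built from KL divergences between positive probability
   vectors, which are nonnegative by Gibbs' inequality (termwise,
   p ln (p / q) >= p - q, and both vectors sum to 1), and the representativeness
   score is a sum of positive parts.  The gain is a combination of these scores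
   with nonnegative weights alpha, beta and 1 - alpha - beta. *)

Lemma ln_le_subr1 (R : realType) (y : R) : 0 < y -> ln y <= y - 1.
Proof.
move=> y_gt0; have := @le_ln1Dx R (y - 1); rewrite [1 + _]addrC subrK; apply.
by rewrite ltrBrDr addNr.
Qed.

Lemma subr_le_mul_ln_div (R : realType) (p q : R) :
  0 < p -> 0 < q -> p - q <= p * ln (p / q).
Proof.
move=> p_gt0 q_gt0.
have ln_qp : p * ln (q / p) <= q - p.
  have -> : q - p = p * (q / p - 1).
    by rewrite mulrBr mulr1 mulrCA divff ?mulr1 // gt_eqF.
  by rewrite ler_pM2l // ln_le_subr1 // divr_gt0.
by rewrite -invf_div lnV ?posrE ?divr_gt0 // mulrN lerNr opprB.
Qed.

Lemma KL_ge0 (R : realType) (K : nat) (p q : 'I_K -> R) :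
  (forall k, 0 < p k) -> (forall k, 0 < q k) ->
  \sum_(k < K) p k = 1 -> \sum_(k < K) q k = 1 -> 0 <= KL p q.
Proof.
move=> p_gt0 q_gt0 p_sum q_sum.
have <- : \sum_(k < K) (p k - q k) = 0 by rewrite sumrB p_sum q_sum subrr.
by apply: ler_sum => k _; apply: subr_le_mul_ln_div.
Qed.

Section Scores.
Variables (R : realType) (K : nat) (X : normedModType R).
Variable h : X -> 'I_K -> R.
Hypothesis h_pos : forall x k, 0 < h x k.
Hypothesis h_sum : forall x, \sum_(k < K) h x k = 1.

Lemma fmin_ge0 (S : {fset X}) (F : X -> R) :
  (forall x, 0 <= F x) -> 0 <= fmin S F.
Proof.
move=> F_ge0; rewrite /fmin; case: (enum_fset S) => [|x0 s] //=.
by apply: (big_ind (fun v => 0 <= v)) => // a b a_ge0 b_ge0; rewrite le_min a_ge0.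
Qed.

Lemma KL_h_ge0 (x y : X) : 0 <= KL (h x) (h y).
Proof. exact: KL_ge0. Qed.

Lemma VAP_ge0 (N : nat) (r : X -> 'I_N -> X) (x : X) : 0 <= VAP h r x.
Proof.
rewrite /VAP mulr_ge0 ?invr_ge0 ?exprn_ge0 ?ler0n // addr_ge0 //.
  by apply: sumr_ge0 => i _; apply: KL_h_ge0.
by do 2![apply: sumr_ge0 => ? _]; apply: KL_h_ge0.
Qed.

Lemma div_score_ge0 (S : {fset X}) (x : X) : 0 <= div_score h S x.
Proof. by apply: fmin_ge0 => y; apply: KL_h_ge0. Qed.

Lemma repr_score_ge0 (Du S : {fset X}) (x : X) : 0 <= repr_score h Du S x.
Proof. by apply: sumr_ge0 => y _; rewrite le_max lexx. Qed.

End Scores.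

Theorem lemma2 (R : realType) (K : nat) (X : normedModType R)
  (h : X -> 'I_K -> R)
  (h_pos : forall x k, 0 < h x k)
  (h_sum : forall x, \sum_(k < K) h x k = 1)
  (N : nat) (N_ge1 : (1 <= N)%N) (eps : R) (r : X -> 'I_N -> X)
  (r_small : forall x i, `|r x i| <= eps)
  (Du : {fset X}) (alpha beta : R)
  (ha : 0 <= alpha) (hb : 0 <= beta) (hab : alpha + beta <= 1)
  (f : {fset X} -> R)
  (hf : forall S : {fset X}, S `<=` Du -> forall xi : X, xi \in Du -> xi \notin S ->
     f (xi |` S) - f S =
       alpha * VAP h r xi + beta * div_score h S xi
       + (1 - alpha - beta) * repr_score h Du S xi) :
  forall (S : {fset X}) (x : X), S `<=` Du -> x \in Du -> f S <= f (x |` S).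
Proof.
move=> S x SDu xDu.
have [xS | xNS] := boolP (x \in S).
  by rewrite (fsetUidPr _ _ _) ?fsub1set.
have gamma_ge0 : 0 <= 1 - alpha - beta by rewrite -addrA -opprD subr_ge0.
have VAP_x := VAP_ge0 h_pos h_sum r x.
have div_x := div_score_ge0 h_pos h_sum S x.
have repr_x := repr_score_ge0 h Du S x.
by rewrite -subr_ge0 hf // !addr_ge0 // mulr_ge0.
Qed.
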